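(* Let $g\ge3$. The factorization $H(g)=(c_1c_2\cdots c_{2g}c_{2g+1}^2c_{2g}\cdots c_2c_1)^2$ of the identity in $\Gamma_g$ can be transformed by elementary transformations and simultaneous conjugations into a factorization containing, as a subword of consecutive letters, the product $c_3^2c_5^2\cdots c_{2g-1}^2c_{2g+1}^{2g-2}$ (the negative part of the daisy relator $D_{2(g-1)}$); explicitly, $H(g)$ is Hurwitz equivalent up to conjugation to ${}_{\varphi^{-2}}(\bar e_{2g})\cdots{}_{\varphi^{-2}}(\bar e_2)\,{}_{\varphi^{-2}}(d_{2g})\cdots{}_{\varphi^{-2}}(d_2)\,\bar d_2\bar d_4\cdots\bar d_{2g}\,e_2e_4\cdots e_{2g}\,c_1^2c_3^2\cdots c_{2g-1}^2\,c_{2g+1}^{2g+4}$. Hence a $D_{2(g-1)}$-substitution can be applied to it.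
   Context: $\Gamma_g$: mapping class group of closed genus-$g$ surface $\Sigma_g$. $c_1,\dots,c_{2g+1}$: standard chain of nonseparating curves on $\Sigma_g$; letters denote right-handed Dehn twists, ${}_f(x)=t_{f(x)}$. $\varphi=c_{2g+1}^{g+1}c_{2g-1}^{g}\cdots c_3^2c_1$; $d_i={}_{c_{i+1}}(c_i)$, $\bar d_i={}_{c_{i+1}^{-1}}(c_i)$, $e_{i+1}={}_{c_i}(c_{i+1})$, $\bar e_{i+1}={}_{c_i^{-1}}(c_{i+1})$. Daisy relation of type $p$: on a sphere with boundary curves $\delta_0,\dots,\delta_{p+1}$, $t_{\delta_0}^{p-1}t_{\delta_1}\cdots t_{\delta_{p+1}}=t_{x_1}\cdots t_{x_{p+1}}$ for interior curves $x_i$ in the standard daisy configuration ($x_i$ cobounds a pair of pants with $\delta_0,\delta_i$). $D_{2(g-1)}=c_3^{-2}c_5^{-2}\cdots c_{2g-1}^{-2}c_{2g+1}^{-(2g-2)}y_1y_2\cdots y_{2g-1}$ is the daisy relator of type $2(g-1)$ on a sphere with $2g$ holes embedded in $\Sigma_g$ whose central boundary is $c_{2g+1}$ and whose other boundaries are parallel copies of $c_{2g+1},c_{2g-1},\dots,c_3,c_3,\dots,c_{2g-1}$; here $y_1$ is a separating curve cutting off a genus-one subsurface, and $y_{g+1},\dots,y_{2g-1}$ coincide with the curves $x_2,\dots,x_g$ of the type-$(g-1)$ daisy relation $c_{2g+1}^{g-2}c_1c_3\cdots c_{2g-1}=x_1\cdots x_g$. A $D_{2(g-1)}$-substitution replaces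 the subword $c_3^2\cdots c_{2g-1}^2c_{2g+1}^{2g-2}$ by $y_1\cdots y_{2g-1}$. *)

From Stdlib Require Import Relations.
From mathcomp Require Import all_boot.
Set Implicit Arguments. Unset Strict Implicit. Unset Printing Implicit Defensive.

Record MGroup := {
  carrier :> Type;
  gmul : carrier -> carrier -> carrier;
  gone : carrier;
  ginv : carrier -> carrier;
  gmulA : forall x y z, gmul x (gmul y z) = gmul (gmul x y) z;
  gmul1x : forall x, gmul gone x = x;
  gmulx1 : forall x, gmul x gone = x;
  gmulVx : forall x, gmul (ginv x) x = gone;
  gmulxV : forall x, gmul x (ginv x) = gone
}.

Section GroupOps.
Variable G : MGroup.

Definition gprod (s : seq G) : G := foldr (@gmul G) (@gone G) s.
Definition gexp (x : G) (n : nat) : G := iter n (@gmul G x) (@gone G).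
(* conjugation  _f(x) = f x f^{-1}  (so t_{f(c)} = f t_c f^{-1}) *)
Definition gconj (f x : G) : G := gmul (gmul f x) (ginv f).

Inductive elem_move : seq G -> seq G -> Prop :=
| move_R l1 l2 a b :
    elem_move (l1 ++ a :: b :: l2) (l1 ++ gconj a b :: a :: l2)
| move_L l1 l2 a b :
    elem_move (l1 ++ a :: b :: l2) (l1 ++ b :: gconj (ginv b) a :: l2).

Definition hurwitz_equiv : seq G -> seq G -> Prop :=
  clos_refl_trans (seq G) elem_move.

Definition hurwitz_equiv_conj (s t : seq G) : Prop :=
  exists h : G, hurwitz_equiv s (map (gconj h) t).
End GroupOps.

(* Standard relations satisfied in Gamma_g by the Dehn twists c_1..c_{2g+1}
   about the standard chain of nonseparating curves. *)
Definition chain_relations (G : MGroup) (g : nat) (c : nat -> G) : Prop :=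
  (forall i, 1 <= i <= 2 * g ->
     gmul (gmul (c i) (c i.+1)) (c i) = gmul (gmul (c i.+1) (c i)) (c i.+1))
  /\ (forall i j, 1 <= i -> j <= 2 * g + 1 -> i.+1 < j ->
     gmul (c i) (c j) = gmul (c j) (c i))
  /\ (let hyp := gprod ([seq c i | i <- iota 1 (2 * g + 1)]
                         ++ rev [seq c i | i <- iota 1 (2 * g + 1)]) in
      gmul hyp hyp = gone G
      /\ forall i, 1 <= i <= 2 * g + 1 -> gmul hyp (c i) = gmul (c i) hyp)
  /\ gexp (gprod [seq c i | i <- iota 1 (2 * g + 1)]) (2 * g + 2) = gone G.

Definition Hword (G : MGroup) (g : nat) (c : nat -> G) : seq G :=
  let w := [seq c i | i <- iota 1 (2 * g)] ++ [:: c (2 * g + 1); c (2 * g + 1)]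
           ++ rev [seq c i | i <- iota 1 (2 * g)] in
  w ++ w.

Definition phi (G : MGroup) (g : nat) (c : nat -> G) : G :=
  gmul (gexp (c (2 * g + 1)) g.+1)
       (gprod [seq gexp (c (2 * k - 1)) k | k <- rev (iota 1 g)]).

Definition d_ (G : MGroup) (c : nat -> G) i := gconj (c i.+1) (c i).
Definition dbar (G : MGroup) (c : nat -> G) i := gconj (ginv (c i.+1)) (c i).
Definition e_ (G : MGroup) (c : nat -> G) j := gconj (c j.-1) (c j).
Definition ebar (G : MGroup) (c : nat -> G) j := gconj (ginv (c j.-1)) (c j).

Definition evens (g : nat) : seq nat := [seq 2 * k | k <- iota 1 g].

Definition target_word (G : MGroup) (g : nat) (c : nat -> G) : seq G :=
  let p2 := ginv (gexp (phi g c) 2) in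
  [seq gconj p2 (ebar c j) | j <- rev (evens g)]
  ++ [seq gconj p2 (d_ c j) | j <- rev (evens g)]
  ++ [seq dbar c j | j <- evens g]
  ++ [seq e_ c j | j <- evens g]
  ++ flatten [seq [:: c (2 * k - 1); c (2 * k - 1)] | k <- iota 1 g]
  ++ nseq (2 * g + 4) (c (2 * g + 1)).

Definition daisy_neg_word (G : MGroup) (g : nat) (c : nat -> G) : seq G :=
  flatten [seq [:: c (2 * k + 1); c (2 * k + 1)] | k <- iota 1 (g - 1)]
  ++ nseq (2 * g - 2) (c (2 * g + 1)).

(* Write A = c_1 c_2 ... c_(2g+1).  Then H(g) = A rev(A) A rev(A), and the
   hyperelliptic involution, the product of A rev(A), is central of order two, so
   the middle copies can be swapped and any factorization obtained can be rotated.
   Braid moves sort each copy of A and rev(A) into the block of odd twists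
   c_1, c_3, ..., c_(2g+1) and a block of the curves d_i, dbar_i, e_i, ebar_i.  The
   product of Y = ebar_(2g) ... ebar_2 d_(2g) ... d_2 conjugates c_(2k-1) to
   c_(2k+1); hence an odd twist slid through Y comes out as c_(2g+1), while Y is
   conjugated by a tail product of odd twists, and these products multiply to
   phi^2.  Finally the remaining commuting odd twists are permuted into
   c_1^2 c_3^2 ... c_(2g-1)^2 c_(2g+1)^(2g+4). *)

From Stdlib Require Import Relations.
From mathcomp Require Import all_boot zify.
Set Implicit Arguments. Unset Strict Implicit. Unset Printing Implicit Defensive.

Local Notation "x ** y" := (@gmul _ x y) (at level 40, left associativity).

Section GroupFacts.
Variable G : MGroup.
Implicit Types (f h x y z : G) (s t : seq G).

Definition gcomm x y := x ** y = y ** x.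

Lemma mulKg x y : ginv x ** (x ** y) = y.
Proof. by rewrite gmulA gmulVx gmul1x. Qed.

Lemma mulgK x y : y ** x ** ginv x = y.
Proof. by rewrite -gmulA gmulxV gmulx1. Qed.

Lemma mulgVK x y : y ** ginv x ** x = y.
Proof. by rewrite -gmulA gmulVx gmulx1. Qed.

Lemma ginv_unique x y : x ** y = gone G -> y = ginv x.
Proof. by move=> xy1; rewrite -[y](mulKg x) xy1 gmulx1. Qed.

Lemma invgK x : ginv (ginv x) = x.
Proof. by symmetry; apply: ginv_unique; rewrite gmulVx. Qed.

Lemma invMg x y : ginv (x ** y) = ginv y ** ginv x.
Proof. by symmetry; apply: ginv_unique; rewrite -gmulA (gmulA y) gmulxV gmul1x gmulxV. Qed.

Lemma invg1 : ginv (gone G) = gone G.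
Proof. by symmetry; apply: ginv_unique; rewrite gmul1x. Qed.

Lemma gconjM f x y : gconj f (x ** y) = gconj f x ** gconj f y.
Proof. by rewrite /gconj !gmulA mulgVK. Qed.

Lemma gconj_comp f h x : gconj f (gconj h x) = gconj (f ** h) x.
Proof. by rewrite /gconj invMg !gmulA. Qed.

Lemma gconj1g x : gconj (gone G) x = x.
Proof. by rewrite /gconj gmul1x invg1 gmulx1. Qed.

Lemma gconjg1 f : gconj f (gone G) = gone G.
Proof. by rewrite /gconj gmulx1 gmulxV. Qed.

Lemma gconjV f x : gconj f (ginv x) = ginv (gconj f x).
Proof. by rewrite /gconj !invMg invgK gmulA. Qed.

Lemma gconj_gconj f h x : gconj (gconj f h) x = gconj f (gconj h (gconj (ginv f) x)).
Proof. by rewrite !gconj_comp /gconj !invMg !invgK !gmulA. Qed.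

Lemma map_gconj1 s : map (gconj (gone G)) s = s.
Proof. by rewrite (eq_map (@gconj1g)) map_id. Qed.

Lemma gconj_id f x : gcomm f x -> gconj f x = x.
Proof. by rewrite /gcomm /gconj => ->; rewrite mulgK. Qed.

Lemma gconj_eq f x y : x ** f = f ** y -> gconj (ginv f) x = y.
Proof. by move=> xf; rewrite /gconj invgK -gmulA xf mulKg. Qed.

Lemma gcomm_sym x y : gcomm x y -> gcomm y x.
Proof. by []. Qed.

Lemma gcommM x y z : gcomm x y -> gcomm x z -> gcomm x (y ** z).
Proof. by rewrite /gcomm => xy xz; rewrite gmulA xy -gmulA xz gmulA. Qed.

Lemma gcommV x y : gcomm x y -> gcomm x (ginv y).
Proof. by rewrite /gcomm => xy; rewrite -[ginv y ** x](mulgK y) -(gmulA _ x y) xy mulKg. Qed.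

Lemma gcomm_conj x f y : gcomm x f -> gcomm x y -> gcomm x (gconj f y).
Proof. by move=> xf xy; apply: gcommM; [apply: gcommM | apply: gcommV]. Qed.

Lemma gprod_cat s t : gprod (s ++ t) = gprod s ** gprod t.
Proof. by elim: s => [|x s IH] /=; rewrite ?gmul1x // IH gmulA. Qed.

Lemma gprod_nseq n x : gprod (nseq n x) = gexp x n.
Proof. by elim: n => //= n ->. Qed.

Lemma gprod_flatten (ss : seq (seq G)) : gprod (flatten ss) = gprod (map (@gprod G) ss).
Proof. by elim: ss => //= s ss IH; rewrite gprod_cat IH. Qed.

Lemma gprod_map_gconj f s : gprod (map (gconj f) s) = gconj f (gprod s).
Proof. by elim: s => /= [|x s ->]; rewrite ?gconjg1 ?gconjM. Qed.

Lemma gcomm_gprod (T : eqType) x (w : T -> G) (r : seq T) :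
  {in r, forall i, gcomm x (w i)} -> gcomm x (gprod (map w r)).
Proof.
elim: r => [|i r IH] xr /=; first by rewrite /gcomm gmul1x gmulx1.
by apply: gcommM; [apply: xr; rewrite mem_head | apply: IH => j rj; apply: xr; rewrite inE rj orbT].
Qed.

End GroupFacts.

Section Hurwitz.
Variable G : MGroup.
Implicit Types (x y : G) (s t u : seq G).

Lemma hurwitz_refl s : hurwitz_equiv s s.
Proof. exact: rt_refl. Qed.

Lemma hurwitz_trans s t u : hurwitz_equiv s t -> hurwitz_equiv t u -> hurwitz_equiv s u.
Proof. exact: rt_trans. Qed.

Lemma elem_move_sym s t : elem_move s t -> hurwitz_equiv t s.
Proof.
case=> l1 l2 a b; apply: rt_step.
  by have := move_L l1 l2 (gconj a b) a; rewrite gconj_comp gmulVx gconj1g.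
by have := move_R l1 l2 b (gconj (ginv b) a); rewrite gconj_comp gmulxV gconj1g.
Qed.

Lemma hurwitz_sym s t : hurwitz_equiv s t -> hurwitz_equiv t s.
Proof.
elim=> [? ? /elem_move_sym //|?|? ? ? _ IH1 _ IH2]; first exact: hurwitz_refl.
exact: hurwitz_trans IH2 IH1.
Qed.

Lemma hurwitz_catlr l1 l2 s t :
  hurwitz_equiv s t -> hurwitz_equiv (l1 ++ s ++ l2) (l1 ++ t ++ l2).
Proof.
elim=> [? ? [k1 k2 a b|k1 k2 a b]|?|? ? ? _ IH1 _ IH2]; last 2 first.
- exact: hurwitz_refl.
- exact: hurwitz_trans IH1 IH2.
- by apply: rt_step; have := move_R (l1 ++ k1) (k2 ++ l2) a b; rewrite -!catA.
- by apply: rt_step; have := move_L (l1 ++ k1) (k2 ++ l2) a b; rewrite -!catA.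
Qed.

Lemma hurwitz_catl l s t : hurwitz_equiv s t -> hurwitz_equiv (l ++ s) (l ++ t).
Proof. by move/(hurwitz_catlr l [::]); rewrite !cats0. Qed.

Lemma hurwitz_catr l s t : hurwitz_equiv s t -> hurwitz_equiv (s ++ l) (t ++ l).
Proof. exact: hurwitz_catlr [::] l s t. Qed.

Lemma hurwitz_cat s s' t t' :
  hurwitz_equiv s s' -> hurwitz_equiv t t' -> hurwitz_equiv (s ++ t) (s' ++ t').
Proof. by move=> ss' tt'; apply: hurwitz_trans (hurwitz_catr _ ss') (hurwitz_catl _ tt'). Qed.

Lemma hurwitz_gprod s t : hurwitz_equiv s t -> gprod s = gprod t.
Proof.
elim=> [? ? [k1 k2 a b|k1 k2 a b]|//|? ? ? _ -> _ ->//]; rewrite !gprod_cat /=; congr (_ ** _).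
  by rewrite /gconj !gmulA mulgVK.
by rewrite /gconj invgK !gmulA gmulxV gmul1x.
Qed.

Lemma hurwitz_move_right x u :
  hurwitz_equiv (x :: u) (u ++ [:: gconj (ginv (gprod u)) x]).
Proof.
elim: u x => [|a u IH] x /=; first by rewrite invg1 gconj1g; apply: hurwitz_refl.
apply: hurwitz_trans (rt_step _ _ _ _ (move_L [::] u x a)) _.
by apply: (hurwitz_catl [:: a]); rewrite invMg -gconj_comp; apply: IH.
Qed.

Lemma hurwitz_block_right s u :
  hurwitz_equiv (s ++ u) (u ++ map (gconj (ginv (gprod u))) s).
Proof.
elim: s => [|x s IH] /=; first by rewrite cats0; apply: hurwitz_refl.
apply: hurwitz_trans (hurwitz_catl [:: x] IH) _.
have := hurwitz_catr (map (gconj (ginv (gprod u))) s) (hurwitz_move_right x u).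
by rewrite -catA.
Qed.

Lemma hurwitz_comm_right x u : gcomm x (gprod u) -> hurwitz_equiv (x :: u) (u ++ [:: x]).
Proof.
by move=> xu; rewrite -{2}(gconj_id (gcomm_sym (gcommV xu))); apply: hurwitz_move_right.
Qed.

Lemma hurwitz_comm_left x u : gcomm x (gprod u) -> hurwitz_equiv (u ++ [:: x]) (x :: u).
Proof. by move=> xu; apply/hurwitz_sym/hurwitz_comm_right. Qed.

(* Moving x across u conjugates it by (gprod u)^-1, which is x itself. *)
Lemma hurwitz_rot s u : gprod (s ++ u) = gone G -> hurwitz_equiv (s ++ u) (u ++ s).
Proof.
elim: s u => [|x s IH] u /=; first by rewrite cats0 => _; apply: hurwitz_refl.
move=> /= xsu1; have su : gprod (s ++ u) = ginv x by apply: ginv_unique.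
apply: hurwitz_trans (hurwitz_move_right x (s ++ u)) _.
rewrite su invgK /gconj mulgK.
have := IH (u ++ [:: x]); rewrite -!catA; apply.
by rewrite catA gprod_cat su /= gmulx1 gmulVx.
Qed.

Lemma hurwitz_rot_trans s t u :
  gprod s = gone G -> hurwitz_equiv s (t ++ u) -> hurwitz_equiv s (u ++ t).
Proof.
move=> s1 st; have tu1 : gprod (t ++ u) = gone G by rewrite -(hurwitz_gprod st).
exact: hurwitz_trans st (hurwitz_rot tu1).
Qed.

Lemma hurwitz_perm (T : eqType) (w : T -> G) (r q : seq T) :
  {in r &, forall i j, gcomm (w i) (w j)} -> perm_eq r q ->
  hurwitz_equiv (map w r) (map w q).
Proof.
elim: r q => [|i r IH] q rcomm; first by move/perm_size; case: q => // _; apply: hurwitz_refl.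
move=> iq; have qi : i \in q by rewrite -(perm_mem iq) mem_head.
move: iq; case/splitPr: qi => q1 q2 iq.
have rq : perm_eq r (q1 ++ q2).
  by rewrite -(perm_cons i); apply: perm_trans iq _; rewrite -cat1s perm_catCA.
have rsub j : j \in q1 -> j \in i :: r by move=> jq; rewrite (perm_mem iq) mem_cat jq.
apply: hurwitz_trans (hurwitz_catl [:: w i] (IH _ _ rq)) _.
  by move=> j k rj rk; apply: rcomm; rewrite inE ?rj ?rk orbT.
have wiq1 : gcomm (w i) (gprod (map w q1)).
  by apply: gcomm_gprod => j /rsub; apply: rcomm; apply: mem_head.
by have := hurwitz_catr (map w q2) (hurwitz_comm_right wiq1); rewrite !map_cat /= -!catA; apply.
Qed.

End Hurwitz.

Section Sliding.
Variables (G : MGroup) (u : seq G) (a : nat -> G) (n : nat).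
Hypothesis a_comm : forall i j, 0 < i <= n -> 0 < j <= n -> gcomm (a i) (a j).
Hypothesis gconj_u_shift : forall i, 0 < i < n -> gconj (ginv (gprod u)) (a i) = a i.+1.

Local Notation conj_word m := (map (gconj (ginv m)) u).
Local Notation centralizes m := (forall i, 0 < i <= n -> gcomm m (a i)).

Definition tail_prod k := gprod [seq a i | i <- iota k (n.+1 - k)].

Lemma tail_prod_cons k : k <= n -> tail_prod k = a k ** tail_prod k.+1.
Proof. by move=> kn; rewrite /tail_prod subSS subSn. Qed.

Lemma centralizesM m i : centralizes m -> 0 < i <= n -> centralizes (m ** a i).
Proof. by move=> mc i_n j j_n; apply/gcomm_sym/gcommM; [apply/gcomm_sym/mc | apply: a_comm]. Qed.

Lemma centralizes_tail m k : centralizes m -> 0 < k -> centralizes (m ** tail_prod k).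
Proof.
move=> mc k0 j j_n; apply/gcomm_sym/gcommM; first exact/gcomm_sym/mc.
by apply: gcomm_gprod => i; rewrite mem_iota => i_n; apply: a_comm; lia.
Qed.

Lemma conj_word_rcons m x :
  hurwitz_equiv (conj_word m ++ [:: x]) (x :: conj_word (m ** x)).
Proof.
apply: hurwitz_trans (hurwitz_block_right _ _) _.
rewrite -map_comp (@eq_map _ _ _ (gconj (ginv (m ** x)))); first exact: hurwitz_refl.
by move=> y /=; rewrite gconj_comp gmulx1 invMg.
Qed.

(* Passing a_i left through the block and back conjugates it by the product of
   the block, which turns it into a_(i+1). *)
Lemma slide_step m i : centralizes m -> 0 < i < n ->
  hurwitz_equiv (conj_word m ++ [:: a i]) (conj_word (m ** a i) ++ [:: a i.+1]).
Proof.
move=> mc i_n; have mic : centralizes (m ** a i) by apply: centralizesM mc _; lia.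
apply: hurwitz_trans (conj_word_rcons _ _) _.
apply: hurwitz_trans (hurwitz_move_right _ _) _.
rewrite gprod_map_gconj -gconjV gconj_gconj invgK (@gconj_id _ _ (a i)); last by apply: mic; lia.
rewrite gconj_u_shift // gconj_id; first exact: hurwitz_refl.
by apply/gcomm_sym/gcommV/gcomm_sym/mic; lia.
Qed.

Lemma slide_letter m k : centralizes m -> 0 < k <= n ->
  hurwitz_equiv (conj_word m ++ [:: a k]) (a n :: conj_word (m ** tail_prod k)).
Proof.
move=> + /andP[k0 kn]; rewrite -(subKn kn); have : n - k < n by lia.
elim: (n - k) m => [|d IH] m dn mc.
  by rewrite subn0 /tail_prod subSn // subnn /= gmulx1; apply: conj_word_rcons.
apply: hurwitz_trans (slide_step mc _) _; first by lia.
rewrite tail_prod_cons ?leq_subr // gmulA; have -> : (n - d.+1).+1 = n - d by lia.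
by apply: IH; [lia | apply: centralizesM mc _; lia].
Qed.

Lemma slide_word m L : centralizes m -> {in L, forall k, 0 < k <= n} ->
  hurwitz_equiv (conj_word m ++ map a L)
                (nseq (size L) (a n) ++ conj_word (m ** gprod (map tail_prod L))).
Proof.
elim: L m => [|k L IH] m mc L_n /=; first by rewrite cats0 gmulx1; apply: hurwitz_refl.
have k_n : 0 < k <= n by apply: L_n; rewrite mem_head.
rewrite -[a k :: _]cat1s catA; apply: hurwitz_trans (hurwitz_catr _ (slide_letter mc k_n)) _.
rewrite /= gmulA; apply: (hurwitz_catl [:: a n]); apply: IH.
  by apply: centralizes_tail; case/andP: k_n.
by move=> i iL; apply: L_n; rewrite inE iL orbT.
Qed.

End Sliding.

Lemma iota_rcons i n : iota i n.+1 = iota i n ++ [:: i + n].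
Proof. by rewrite -addn1 iotaD. Qed.

Lemma count_le_iota x n : count (fun k => k <= x) (iota 1 n) = minn x n.
Proof. by elim: n => [|n IH]; rewrite ?minn0 // iota_rcons count_cat IH /=; lia. Qed.

Lemma count_mem_flatten_nseq x (s : seq nat) :
  count_mem x (flatten [seq nseq k k | k <- s]) = count_mem x s * x.
Proof. by elim: s => //= k s IH; rewrite count_cat IH count_nseq /=; case: eqP => [->|]; lia. Qed.

Lemma count_mem_flatten_tails x n (s : seq nat) :
  count_mem x (flatten [seq iota k (n.+1 - k) | k <- s]) = count (fun k => k <= x) s * (x <= n).
Proof.
elim: s => //= k s IH; rewrite count_cat IH count_uniq_mem ?iota_uniq // mem_iota.
by case: (leqP k x) => kx; case: (leqP x n) => xn /=; lia.
Qed.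

(* Index form of: the tails a_k a_(k+1) ... a_n, for k = n..1 and then k = 1..n,
   multiply to (a_n^n ... a_2^2 a_1)^2 when the a_k commute. *)
Lemma perm_tails_powers n :
  perm_eq (flatten [seq iota k (n.+1 - k) | k <- rev (iota 1 n) ++ iota 1 n])
          (flatten [seq nseq k k | k <- rev (iota 1 n)]
             ++ flatten [seq nseq k k | k <- rev (iota 1 n)]).
Proof.
apply/allP => x _; apply/eqP.
rewrite count_cat count_mem_flatten_tails !count_mem_flatten_nseq !count_cat !count_rev.
by rewrite count_le_iota count_uniq_mem ?iota_uniq // mem_iota; case: (leqP x n) => xn /=; lia.
Qed.

Lemma count_flatten_pairs (T : eqType) (a : pred T) (s : seq T) :
  count a (flatten [seq [:: x; x] | x <- s]) = 2 * count a s.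
Proof. by elim: s => //= x s ->; lia. Qed.

Lemma perm_odd_letters n :
  perm_eq (iota 1 n.+1 ++ rev (iota 1 n.+1) ++ nseq (2 * n + 2) n.+1)
          (flatten [seq [:: k; k] | k <- iota 1 n] ++ nseq (2 * n + 4) n.+1).
Proof.
apply/permP => a; rewrite iota_rcons rev_cat !count_cat count_rev !count_nseq.
by rewrite count_flatten_pairs count_rev /= add1n; lia.
Qed.

Section ChainWords.
Variables (G : MGroup) (g : nat) (c : nat -> G).
Hypothesis c_braid :
  forall i, 1 <= i <= 2 * g -> c i ** c i.+1 ** c i = c i.+1 ** c i ** c i.+1.
Hypothesis c_far_comm :
  forall i j, 1 <= i -> j <= 2 * g + 1 -> i.+1 < j -> c i ** c j = c j ** c i.

Lemma twist_comm i j : 0 < i <= 2 * g + 1 -> 0 < j <= 2 * g + 1 ->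
  i.+1 < j \/ j.+1 < i -> gcomm (c i) (c j).
Proof. by move=> i_g j_g [ij | ji]; [apply: c_far_comm | symmetry; apply: c_far_comm]; lia. Qed.

Definition odd_twist k := c (2 * k - 1).

Lemma odd_twist_comm i j : 0 < i <= g.+1 -> 0 < j <= g.+1 -> gcomm (odd_twist i) (odd_twist j).
Proof.
move=> i_g j_g; have [-> // | ij] := eqVneq i j.
by apply: twist_comm; lia.
Qed.

Lemma odd_twist_last : odd_twist g.+1 = c (2 * g + 1).
Proof. by rewrite /odd_twist; congr c; lia. Qed.

Definition chain_word m := [seq c i | i <- iota 1 (2 * m + 1)].
Definition odd_word m := map odd_twist (iota 1 m.+1).

Lemma chain_word_rcons m : chain_word m.+1 = chain_word m ++ [:: c (2 * m.+1); c (2 * m.+1).+1].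
Proof.
rewrite /chain_word (_ : 2 * m.+1 + 1 = 2 * m + 1 + 2) ?iotaD ?map_cat /=; last by lia.
by congr (_ ++ [:: c _; c _]); lia.
Qed.

Lemma odd_word_rcons m : odd_word m.+1 = odd_word m ++ [:: c (2 * m.+1).+1].
Proof. by rewrite /odd_word iota_rcons map_cat /odd_twist; congr (_ ++ [:: c _]); lia. Qed.

Lemma odd_word_last m : odd_word m = map odd_twist (iota 1 m) ++ [:: c (2 * m + 1)].
Proof. by rewrite /odd_word iota_rcons map_cat /odd_twist; congr (_ ++ [:: c _]); lia. Qed.

Lemma evens_rcons m : evens m.+1 = evens m ++ [:: 2 * m.+1].
Proof. by rewrite /evens iota_rcons map_cat add1n. Qed.

Lemma chain_word_dbar m : m <= g ->
  hurwitz_equiv (chain_word m) (odd_word m ++ map (dbar c) (evens m)).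
Proof.
elim: m => [_|m IH m_g]; first exact: hurwitz_refl.
rewrite chain_word_rcons odd_word_rcons evens_rcons map_cat -!catA.
apply: hurwitz_trans (hurwitz_catr _ (IH (ltnW m_g))) _; rewrite -!catA; apply: hurwitz_catl.
apply: hurwitz_trans (rt_step _ _ _ _ (move_L _ [::] (c (2 * m.+1)) (c (2 * m.+1).+1))) _.
have cD : gcomm (c (2 * m.+1).+1) (gprod (map (dbar c) (evens m))).
  apply: gcomm_gprod => j /mapP[k]; rewrite mem_iota => k_m ->.
  by apply: gcomm_conj; [apply: gcommV|]; apply: twist_comm; lia.
by have := hurwitz_catr [:: dbar c (2 * m.+1)] (hurwitz_comm_left cD); rewrite -!catA; apply.
Qed.

Lemma chain_word_e m : m <= g ->
  hurwitz_equiv (chain_word m) (map (e_ c) (evens m) ++ odd_word m).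
Proof.
elim: m => [_|m IH m_g]; first exact: hurwitz_refl.
rewrite chain_word_rcons evens_rcons map_cat -catA.
apply: hurwitz_trans (hurwitz_catr _ (IH (ltnW m_g))) _; rewrite -catA; apply: hurwitz_catl.
rewrite odd_word_rcons odd_word_last -!catA /=.
have -> : e_ c (2 * m.+1) = gconj (c (2 * m + 1)) (c (2 * m.+1)).
  by rewrite /e_; congr (gconj (c _) _); lia.
apply: hurwitz_trans (rt_step _ _ _ _ (move_R _ [:: c (2 * m.+1).+1] _ _)) _.
have eO : gcomm (gconj (c (2 * m + 1)) (c (2 * m.+1))) (gprod (map odd_twist (iota 1 m))).
  apply: gcomm_gprod => k; rewrite mem_iota => k_m.
  by apply/gcomm_sym/gcomm_conj; apply: twist_comm; lia.
have := hurwitz_catr [:: c (2 * m + 1); c (2 * m.+1).+1] (hurwitz_comm_left eO).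
by rewrite -!catA; apply.
Qed.

Lemma rev_chain_word_ebar m : m <= g ->
  hurwitz_equiv (rev (chain_word m)) (rev (odd_word m) ++ map (ebar c) (rev (evens m))).
Proof.
elim: m => [_|m IH m_g]; first exact: hurwitz_refl.
rewrite chain_word_rcons evens_rcons odd_word_rcons !rev_cat /=.
apply: hurwitz_trans (hurwitz_catl [:: _; _] (IH (ltnW m_g))) _; apply: (hurwitz_catl [:: _]).
rewrite odd_word_last rev_cat /=.
have -> : ebar c (2 * m.+1) = gconj (ginv (c (2 * m + 1))) (c (2 * m.+1)).
  by rewrite /ebar; congr (gconj (ginv (c _)) _); lia.
apply: hurwitz_trans (rt_step _ _ _ _ (move_L [::] _ _ _)) _; apply: (hurwitz_catl [:: _]).
have eO : gcomm (gconj (ginv (c (2 * m + 1))) (c (2 * m.+1)))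
                (gprod (rev (map odd_twist (iota 1 m)))).
  rewrite -map_rev; apply: gcomm_gprod => k; rewrite mem_rev mem_iota => k_m.
  by apply/gcomm_sym/gcomm_conj; [apply: gcommV|]; apply: twist_comm; lia.
have := hurwitz_catr (map (ebar c) (rev (evens m))) (hurwitz_comm_right eO).
by rewrite -!catA; apply.
Qed.

Lemma rev_chain_word_d m : m <= g ->
  hurwitz_equiv (rev (chain_word m)) (map (d_ c) (rev (evens m)) ++ rev (odd_word m)).
Proof.
elim: m => [_|m IH m_g]; first exact: hurwitz_refl.
rewrite chain_word_rcons evens_rcons odd_word_rcons !rev_cat /=.
apply: hurwitz_trans (hurwitz_catl [:: _; _] (IH (ltnW m_g))) _.
apply: hurwitz_trans (rt_step _ _ _ _ (move_R [::] _ _ _)) _; apply: (hurwitz_catl [:: _]).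
have cD : gcomm (c (2 * m.+1).+1) (gprod (map (d_ c) (rev (evens m)))).
  rewrite map_rev -map_comp -map_rev; apply: gcomm_gprod => k; rewrite mem_rev mem_iota => k_m.
  by apply: gcomm_conj; apply: twist_comm; lia.
by have := hurwitz_catr (rev (odd_word m)) (hurwitz_comm_right cD); rewrite -!catA; apply.
Qed.

Definition desc_prod m := gprod (rev [seq c i | i <- iota 1 m]).

Lemma desc_prodS m : desc_prod m.+1 = c m.+1 ** desc_prod m.
Proof. by rewrite /desc_prod iota_rcons map_cat rev_cat. Qed.

Lemma desc_prod_shift m i : m <= 2 * g + 1 -> 0 < i < m ->
  desc_prod m ** c i.+1 = c i ** desc_prod m.
Proof.
elim: m i => [|m IH] i m_g i_m; first by lia.
rewrite desc_prodS; have [i_lt | ->] : i < m \/ i = m by lia.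
  rewrite -gmulA IH ?gmulA; [congr (_ ** _) | lia | lia].
  by apply: twist_comm; lia.
case: m IH m_g i_m => [|m] _ m_g m_pos; first by lia.
have cD : gcomm (c m.+2) (desc_prod m).
  rewrite /desc_prod -map_rev; apply: gcomm_gprod => k; rewrite mem_rev mem_iota => k_m.
  by apply: twist_comm; lia.
rewrite desc_prodS -!gmulA -cD !gmulA c_braid; last by lia.
by rewrite -!gmulA.
Qed.

Definition y_word := map (ebar c) (rev (evens g)) ++ map (d_ c) (rev (evens g)).

(* With b = c_(2g+1)...c_1 and o = c_(2g+1)...c_3 c_1, the product of y_word
   is o^-1 b b o^-1; o commutes with the odd twists and b b shifts indices by 2. *)
Lemma gconj_y_word k : 0 < k < g.+1 ->
  gconj (ginv (gprod y_word)) (odd_twist k) = odd_twist k.+1.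
Proof.
move=> k_g; set b := gprod (rev (chain_word g)); set o := gprod (rev (odd_word g)).
have Eb : gprod (map (ebar c) (rev (evens g))) = ginv o ** b.
  by rewrite /b (hurwitz_gprod (rev_chain_word_ebar (leqnn g))) gprod_cat mulKg.
have Db : gprod (map (d_ c) (rev (evens g))) = b ** ginv o.
  by rewrite /b (hurwitz_gprod (rev_chain_word_d (leqnn g))) gprod_cat mulgK.
have oV j : 0 < j <= g.+1 -> odd_twist j ** ginv o = ginv o ** odd_twist j.
  move=> j_g; apply/gcommV; rewrite /o /odd_word -map_rev.
  by apply: gcomm_gprod => i; rewrite mem_rev mem_iota => i_g; apply: odd_twist_comm; lia.
have bb : b = desc_prod (2 * g + 1) by [].
have s1 : odd_twist k ** b = b ** c (2 * k).
  by rewrite bb (_ : 2 * k = (2 * k - 1).+1) ?desc_prod_shift //; lia.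
have s2 : c (2 * k) ** b = b ** odd_twist k.+1.
  by rewrite bb /odd_twist (_ : 2 * k.+1 - 1 = (2 * k).+1) ?desc_prod_shift //; lia.
apply: gconj_eq; rewrite gprod_cat Eb Db !gmulA oV; last by lia.
rewrite -(gmulA (ginv o) _ b) s1 gmulA -(gmulA (ginv o ** b) _ b) s2 gmulA.
by rewrite -(gmulA _ (odd_twist k.+1)) oV ?gmulA //; lia.
Qed.

Lemma phi_odd_twists :
  phi g c = gprod (map odd_twist (flatten [seq nseq k k | k <- rev (iota 1 g.+1)])).
Proof.
rewrite map_flatten gprod_flatten -!map_comp (@eq_map _ _ _ (fun k => gexp (odd_twist k) k)).
  rewrite iota_rcons rev_cat add1n /phi /odd_twist; congr (gexp (c _) _ ** _); lia.
by move=> k /=; rewrite map_nseq gprod_nseq.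
Qed.

Lemma gprod_tails_phi :
  gprod (map (tail_prod odd_twist g.+1) (rev (iota 1 g.+1) ++ iota 1 g.+1)) = gexp (phi g c) 2.
Proof.
set L := rev (iota 1 g.+1) ++ iota 1 g.+1.
have -> : map (tail_prod odd_twist g.+1) L
        = map (@gprod G) (map (map odd_twist) [seq iota k (g.+2 - k) | k <- L]).
  by rewrite -!map_comp.
rewrite -gprod_flatten -map_flatten.
rewrite (hurwitz_gprod (hurwitz_perm (w := odd_twist) _ (perm_tails_powers g.+1))).
  by rewrite map_cat gprod_cat -phi_odd_twists /= gmulx1.
move=> i j /flatten_mapP[k + ik] /flatten_mapP[l + jl]; rewrite !mem_cat !mem_rev orbb.
rewrite !mem_iota in ik jl * => k_g l_g; apply: odd_twist_comm; lia.
Qed.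

(* Each odd twist slides through the block y_word, its index going up until it
   leaves as c_(2g+1); the block is conjugated by the product of the slides. *)
Lemma y_word_absorbs_odd :
  hurwitz_equiv (y_word ++ rev (odd_word g) ++ odd_word g)
    (nseq (2 * g + 2) (c (2 * g + 1)) ++ map (gconj (ginv (gexp (phi g c) 2))) y_word).
Proof.
have := slide_word (u := y_word) (a := odd_twist) (n := g.+1) odd_twist_comm gconj_y_word
  (m := gone G) (L := rev (iota 1 g.+1) ++ iota 1 g.+1).
rewrite invg1 map_gconj1 gmul1x gprod_tails_phi size_cat size_rev size_iota.
rewrite /odd_word map_cat map_rev odd_twist_last /odd_twist.
rewrite (_ : g.+1 + g.+1 = 2 * g + 2); last by lia.
apply; first by move=> i _; rewrite /gcomm gmul1x gmulx1.
by move=> k; rewrite mem_cat mem_rev orbb mem_iota; lia.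
Qed.

Lemma Hword_chain_word :
  Hword g c = chain_word g ++ rev (chain_word g) ++ chain_word g ++ rev (chain_word g).
Proof. by rewrite /Hword /chain_word addn1 iota_rcons map_cat rev_cat /= add1n -!catA. Qed.

Lemma target_word_split :
  target_word g c = map (gconj (ginv (gexp (phi g c) 2))) y_word
    ++ map (dbar c) (evens g) ++ map (e_ c) (evens g)
    ++ map odd_twist (flatten [seq [:: k; k] | k <- iota 1 g] ++ nseq (2 * g + 4) g.+1).
Proof.
rewrite /target_word /y_word !map_cat -!map_comp map_flatten -map_comp map_nseq -!catA.
by rewrite odd_twist_last.
Qed.

Definition hyperelliptic := gprod (chain_word g ++ rev (chain_word g)).

Hypothesis hyperelliptic_central :
  forall i, 1 <= i <= 2 * g + 1 -> hyperelliptic ** c i = c i ** hyperelliptic.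
Hypothesis hyperelliptic_involution : hyperelliptic ** hyperelliptic = gone G.

Lemma gprod_Hword : gprod (Hword g c) = gone G.
Proof. by rewrite Hword_chain_word catA gprod_cat. Qed.

Lemma Hword_sorted :
  hurwitz_equiv (Hword g c) (odd_word g ++ (map (dbar c) (evens g) ++ map (e_ c) (evens g)
    ++ odd_word g ++ rev (odd_word g) ++ y_word ++ rev (odd_word g))).
Proof.
set A := chain_word g; rewrite Hword_chain_word.
have fixA : map (gconj (ginv hyperelliptic)) (rev A) = rev A.
  rewrite /A /chain_word -map_rev -[RHS]map_id -!map_comp.
  apply/eq_in_map => i; rewrite mem_rev mem_iota => i_g /=.
  by apply/gconj_id/gcomm_sym/gcommV/gcomm_sym/hyperelliptic_central; lia.
have AArr : hurwitz_equiv (A ++ rev A ++ A ++ rev A) (A ++ A ++ rev A ++ rev A).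
  apply: hurwitz_catl; have := hurwitz_block_right (rev A) (A ++ rev A).
  by rewrite -/hyperelliptic fixA -!catA.
apply: hurwitz_trans AArr _.
apply: hurwitz_trans (hurwitz_cat (chain_word_dbar (leqnn g)) (hurwitz_cat (chain_word_e (leqnn g))
  (hurwitz_cat (rev_chain_word_ebar (leqnn g)) (rev_chain_word_d (leqnn g))))) _.
by rewrite /y_word -!catA; apply: hurwitz_refl.
Qed.

Lemma Hword_hurwitz_target : hurwitz_equiv (Hword g c) (target_word g c).
Proof.
set D := map (dbar c) (evens g); set E := map (e_ c) (evens g); set O := odd_word g.
set F := map (gconj (ginv (gexp (phi g c) 2))) y_word.
have rot1 : hurwitz_equiv (Hword g c) ((D ++ E ++ O ++ rev O) ++ y_word ++ rev O ++ O).
  by have := hurwitz_rot_trans gprod_Hword Hword_sorted; rewrite -!catA.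
have slid : hurwitz_equiv (Hword g c)
    ((D ++ E ++ O ++ rev O ++ nseq (2 * g + 2) (c (2 * g + 1))) ++ F).
  by have := hurwitz_trans rot1 (hurwitz_catl _ y_word_absorbs_odd); rewrite -!catA.
apply: hurwitz_trans (hurwitz_rot_trans gprod_Hword slid) _.
rewrite target_word_split; do 3 apply: hurwitz_catl.
have := hurwitz_perm (w := odd_twist) _ (perm_odd_letters g).
rewrite !map_cat map_rev !map_nseq odd_twist_last.
apply => i j; rewrite !mem_cat !mem_rev !mem_iota !mem_nseq => i_g j_g.
by apply: odd_twist_comm; lia.
Qed.

End ChainWords.

Lemma target_word_daisy (G : MGroup) g (c : nat -> G) : 0 < g ->
  exists l1 l2, target_word g c = l1 ++ daisy_neg_word g c ++ l2.
Proof.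
move=> g_pos; rewrite /target_word /daisy_neg_word.
have -> : iota 1 g = [:: 1] ++ map (addn 1) (iota 1 (g - 1)).
  by rewrite -iotaDl; case: g g_pos => // g _; rewrite subn1.
rewrite (_ : 2 * g + 4 = (2 * g - 2) + 6) ?nseqD; last by lia.
rewrite map_cat flatten_cat.
have -> : [seq [:: c (2 * k - 1); c (2 * k - 1)] | k <- map (addn 1) (iota 1 (g - 1))]
        = [seq [:: c (2 * k + 1); c (2 * k + 1)] | k <- iota 1 (g - 1)].
  by rewrite -map_comp; apply: eq_map => k /=; rewrite (_ : 2 * (1 + k) - 1 = 2 * k + 1) //; lia.
by do 2 eexists; rewrite !catA.
Qed.

Theorem theorem4p7 (g : nat) (hg : 3 <= g) (G : MGroup) (c : nat -> G)
  (hc : chain_relations g c) :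
  hurwitz_equiv_conj (Hword g c) (target_word g c)
  /\ exists l1 l2 : seq G, target_word g c = l1 ++ daisy_neg_word g c ++ l2.
Proof.
case: hc => braid [far_comm [[involution central] _]]; split.
  by exists (gone G); rewrite map_gconj1; apply: Hword_hurwitz_target.
by apply: target_word_daisy; lia.
Qed.
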